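(* Let $n\ge3$ and for $i\in\mathbb Z/n\mathbb Z$ let $e_i=x_{i,i+1}\in\mathcal E_n$, where the vertices are labeled $0,1,\dots,n-1$ modulo $n$. Then in $\mathcal E_n$: $$R_1:=\sum_{i=0}^{n-1}e_{i-1}e_{i-2}\cdots e_{1}e_0\,e_{n-1}e_{n-2}\cdots e_{i+1}=0,\qquad R_{n-1}:=\sum_{i=0}^{n-1}e_{i+1}e_{i+2}\cdots e_{n-1}\,e_0e_1\cdots e_{i-1}=0,$$ where the $i$-th summand of $R_1$ is the product of all $e_j$ with $j\ne i$ in cyclically decreasing order of index starting from $e_{i-1}$ and ending with $e_{i+1}$, and the $i$-th summand of $R_{n-1}$ is the product of all $e_j$ with $j\neq i$ in cyclically increasing order starting from $e_{i+1}$ and ending with $e_{i-1}$.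
   Context: Let $n\ge 1$. The Fomin–Kirillov algebra $\mathcal E_n$ is the associative $\mathbb Q$-algebra with generators $x_{ij}$ for ordered pairs of distinct $i,j$ in an $n$-element index set (here $\{0,1,\dots,n-1\}$), subject to $x_{ij}=-x_{ji}$, $x_{ij}^2=0$, $x_{ij}x_{kl}=x_{kl}x_{ij}$ for distinct $i,j,k,l$, and $x_{ij}x_{jk}+x_{jk}x_{ki}+x_{ki}x_{ij}=0$ for distinct $i,j,k$. *)

From HB Require Import structures.
From mathcomp Require Import all_boot all_order all_algebra.
Set Implicit Arguments. Unset Strict Implicit. Unset Printing Implicit Defensive.
Import GRing.Theory.
Local Open Scope ring_scope.

(* The defining relations of the Fomin--Kirillov algebra E_n, for a family
   x : 'I_n -> 'I_n -> A of elements of a ring A (indices 0..n-1).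
   Only the values x i j with i <> j are generators; the diagonal is unused. *)
Definition FK_relations (n : nat) (A : pzRingType) (x : 'I_n -> 'I_n -> A) : Prop :=
  [/\ (forall i j : 'I_n, i != j -> x i j = - x j i),
      (forall i j : 'I_n, i != j -> x i j * x i j = 0),
      (forall i j k l : 'I_n, uniq [:: i; j; k; l] -> x i j * x k l = x k l * x i j) &
      (forall i j k : 'I_n, uniq [:: i; j; k] ->
          x i j * x j k + x j k * x k i + x k i * x i j = 0)].

(* e_j = x_{j, j+1}, with j read modulo n (j : nat). For n = 0 it is 0 (unused). *)
Definition FK_e (n : nat) (A : pzRingType) (x : 'I_n -> 'I_n -> A) (j : nat) : A :=
  match n as m return ('I_m -> 'I_m -> A) -> A with
  | 0 => fun _ => 0
  | m.+1 => fun y => y (inZp j) (inZp j.+1)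
  end x.

Definition FK_R1 (n : nat) (A : pzRingType) (x : 'I_n -> 'I_n -> A) : A :=
  \sum_(0 <= i < n) \prod_(1 <= k < n) FK_e x (i + n - k)%N.

Definition FK_Rn1 (n : nat) (A : pzRingType) (x : 'I_n -> 'I_n -> A) : A :=
  \sum_(0 <= i < n) \prod_(1 <= k < n) FK_e x (i + k)%N.

From HB Require Import structures.
From mathcomp Require Import all_boot all_order all_algebra.
From mathcomp Require Import zify.
Set Implicit Arguments. Unset Strict Implicit. Unset Printing Implicit Defensive.
Import GRing.Theory.
Local Open Scope ring_scope.

(* For a sequence of distinct vertices s = v_0 ... v_m, let P(s) be the path
   product x_{v_0 v_1} x_{v_1 v_2} ... x_{v_{m-1} v_m} and S(s) the sum of
   P over all cyclic rotations of s.  The three-term relation, in the form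
   x_{L v0} x_{v0 v1} = x_{v0 v1} x_{L v1} + x_{L v1} x_{L v0}, together with
   the commutation relations, gives
     S(v0 v1 t) = x_{v0 v1} S(v1 t) + S(v1 t) x_{w v0}   (w the last vertex),
   so S(s) = 0 by induction, the base case S(v0 v1) = x_{v0 v1} + x_{v1 v0}
   being antisymmetry.  R_{n-1} is S of the cycle 0, 1, ..., n-1, and R_1 is
   R_{n-1} computed in the opposite ring, where the relations still hold. *)

Fixpoint path_prod (n : nat) (R : pzRingType) (x : 'I_n -> 'I_n -> R)
    (s : seq 'I_n) : R :=
  if s is a :: ((b :: _) as t) then x a b * path_prod x t else 1.

Definition cyclic_path_sum (n : nat) (R : pzRingType) (x : 'I_n -> 'I_n -> R)
    (s : seq 'I_n) : R :=
  \sum_(0 <= i < size s) path_prod x (rot i s).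

Section PathProducts.

Variables (n : nat) (R : pzRingType) (x : 'I_n -> 'I_n -> R).

Lemma path_prod_cons2 a b s : path_prod x [:: a, b & s] = x a b * path_prod x (b :: s).
Proof. by []. Qed.

Lemma path_prod_cat a p b q :
  path_prod x ((a :: p) ++ b :: q) =
    path_prod x (a :: p) * x (last a p) b * path_prod x (b :: q).
Proof.
elim: p a => [|c p IH] a; first by rewrite /= mul1r.
by rewrite [_ ++ _]/= path_prod_cons2 -cat_cons IH path_prod_cons2 !mulrA.
Qed.

Lemma path_prod_rcons a p b :
  path_prod x (rcons (a :: p) b) = path_prod x (a :: p) * x (last a p) b.
Proof. by rewrite -cats1 path_prod_cat mulr1. Qed.

Lemma path_prod_iota (w : nat -> 'I_n) a l :
  path_prod x (map w (iota a l.+1)) = \prod_(a <= k < a + l) x (w k) (w k.+1).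
Proof.
elim: l a => [|l IH] a; first by rewrite addn0 big_geq.
rewrite [iota _ _]/= [map _ _]/= path_prod_cons2.
rewrite -[_ :: map _ _]/(map w (iota a.+1 l.+1)) IH.
by rewrite [in RHS]big_ltn ?addnS ?ltnS ?leq_addr.
Qed.

Hypothesis x_commute : forall i j k l : 'I_n,
  uniq [:: i; j; k; l] -> x i j * x k l = x k l * x i j.

Lemma path_prod_commute a b p :
  a != b -> a \notin p -> b \notin p -> uniq p ->
  x a b * path_prod x p = path_prod x p * x a b.
Proof.
move=> ab; elim: p => [|c t IH] /=; first by rewrite mul1r mulr1.
rewrite !inE !negb_or => /andP[ac at_] /andP[bc bt] /andP[ct ut].
case: t IH at_ bt ct ut => [|d t] IH at_ bt ct ut; first by rewrite mul1r mulr1.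
have cd : c != d by move: ct; rewrite inE negb_or => /andP[].
move: (at_) (bt); rewrite !inE !negb_or => /andP[ad _] /andP[bd _].
rewrite mulrA x_commute; last by rewrite /= !inE !negb_or ab ac ad bc bd cd.
by rewrite -mulrA IH // mulrA.
Qed.

Hypotheses
  (x_antisym : forall i j : 'I_n, i != j -> x i j = - x j i)
  (x_three_term : forall i j k : 'I_n, uniq [:: i; j; k] ->
     x i j * x j k + x j k * x k i + x k i * x i j = 0).

Lemma three_term_rewrite c a b : uniq [:: c; a; b] ->
  x c a * x a b = x a b * x c b + x c b * x c a.
Proof.
move=> uabc; have /eqP := x_three_term uabc.
have cb : b != c.
  by move: uabc; rewrite /= !inE !negb_or => /andP[/andP[_ cb] _]; rewrite eq_sym.
by rewrite (x_antisym cb) mulrN mulNr -addrA addr_eq0 -opprD opprK => /eqP.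
Qed.

Lemma path_prod_insert d D v0 v1 K : uniq ((d :: D) ++ [:: v0, v1 & K]) ->
  path_prod x ((d :: D) ++ [:: v0, v1 & K]) =
    x v0 v1 * path_prod x ((d :: D) ++ v1 :: K)
  + path_prod x ((d :: D) ++ v1 :: K) * x (last d D) v0.
Proof.
set L := last d D; rewrite cat_uniq => /and3P[uD /hasPn hD /and3P[]].
rewrite !inE !negb_or => /andP[v01 v0K] v1K uK.
have LD : L \in d :: D by exact: mem_last.
have v0D : v0 \notin d :: D by apply: hD; rewrite inE eqxx.
have v1D : v1 \notin d :: D by apply: hD; rewrite !inE eqxx orbT.
have LK : L \notin v1 :: K.
  by apply: contraL LD => LK; apply: hD; rewrite inE LK orbT.
have Lv0 : L != v0 by apply: contraNneq v0D => <-.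
have Lv1 : L != v1 by apply: contraNneq v1D => <-.
have v0v1K : v0 \notin v1 :: K by rewrite inE negb_or v01.
rewrite !path_prod_cat path_prod_cons2 -/L mulrA -(mulrA _ (x L v0)).
rewrite (@three_term_rewrite L v0 v1); last by rewrite /= !inE !negb_or Lv0 Lv1 v01.
rewrite mulrDr mulrDl !mulrA.
rewrite -path_prod_commute //; congr (_ + _).
by rewrite -!mulrA (path_prod_commute Lv0) //= v1K.
Qed.

Lemma cyclic_path_sum_cons v0 v1 t : uniq [:: v0, v1 & t] ->
  cyclic_path_sum x [:: v0, v1 & t] =
    x v0 v1 * cyclic_path_sum x (v1 :: t)
  + cyclic_path_sum x (v1 :: t) * x (last v1 t) v0.
Proof.
move=> ut; rewrite /cyclic_path_sum mulr_sumr mulr_suml -big_split /=.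
rewrite [in LHS]big_ltn // [in LHS]big_add1 [in LHS]big_ltn // [in RHS]big_ltn //.
rewrite rot0 rot1_cons path_prod_rcons rot0 path_prod_cons2.
rewrite addrA; congr (_ + _); apply: eq_big_nat => -[//|j] /andP[_ jt].
have ->: rot j.+2 [:: v0, v1 & t] = drop j t ++ [:: v0, v1 & take j t] by [].
have ->: rot j.+1 (v1 :: t) = drop j t ++ v1 :: take j t by [].
have ut' : uniq (drop j t ++ [:: v0, v1 & take j t]) by rewrite -(rot_uniq j.+2) in ut.
have := cat_take_drop j t; have := size_drop j t.
case: (drop j t) ut' => [|d D] ut' dsize tE; first by move: jt dsize => /=; lia.
by rewrite -[in last v1 t]tE last_cat path_prod_insert.
Qed.

Lemma cyclic_path_sum_eq0 s : uniq s -> (2 <= size s)%N -> cyclic_path_sum x s = 0.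
Proof.
elim: s => [|v0 [|v1 [|v2 t]] IH] //= us _.
  have v01 : v0 != v1 by move: us => /andP[]; rewrite inE.
  rewrite /cyclic_path_sum big_nat_recl ?big_nat1 //= !mulr1 (x_antisym v01).
  by rewrite addNr.
by rewrite cyclic_path_sum_cons // IH ?mulr0 ?mul0r ?addr0 //; case/andP: us.
Qed.

End PathProducts.

Section Cycle.

Variable n' : nat.
Local Notation n := n'.+1.

Definition cycle_vertex (j : nat) : 'I_n := inZp j.

Lemma map_cycle_vertex_iota_periodic a l :
  map cycle_vertex (iota (a + n) l) = map cycle_vertex (iota a l).
Proof.
elim: l a => [|l IH] a //=; rewrite -(IH a.+1) addSn; congr (_ :: _).
by apply: val_inj; rewrite /= modnDr.
Qed.

Lemma rot_cycle a i : (i <= n)%N ->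
  rot i (map cycle_vertex (iota a n)) = map cycle_vertex (iota (a + i) n).
Proof.
move=> hi; rewrite -map_rot /rot drop_iota take_iota (minn_idPl hi) map_cat.
rewrite -(map_cycle_vertex_iota_periodic a i) -map_cat.
by rewrite -[in iota (a + n) _](subnKC hi) addnA -iotaD subnK.
Qed.

Lemma uniq_cycle a : (a <= n)%N -> uniq (map cycle_vertex (iota a n)).
Proof.
move=> an; rewrite -[a in iota a]add0n -rot_cycle // rot_uniq.
rewrite map_inj_in_uniq ?iota_uniq //.
move=> i j; rewrite !mem_iota !add0n => hi hj /(congr1 val) /=.
by rewrite !modn_small.
Qed.

Lemma FK_Rn1_cyclic_path_sum (R : pzRingType) (x : 'I_n -> 'I_n -> R) :
  FK_Rn1 x = cyclic_path_sum x (map cycle_vertex (iota 1 n)).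
Proof.
rewrite /FK_Rn1 /cyclic_path_sum size_map size_iota.
apply: eq_big_nat => i /andP[_ hi].
rewrite rot_cycle 1?ltnW // path_prod_iota -[(1 + i)%N in RHS]add0n big_addn add0n addKn.
rewrite big_add1; apply: eq_bigr => k _.
by rewrite (_ : k + (1 + i) = i + k.+1)%N //; lia.
Qed.

End Cycle.

Lemma FK_Rn1_eq0 n (R : pzRingType) (x : 'I_n -> 'I_n -> R) :
  (2 <= n)%N -> FK_relations x -> FK_Rn1 x = 0.
Proof.
case: n x => [//|n'] x n2 [xN _ xC x3].
rewrite FK_Rn1_cyclic_path_sum cyclic_path_sum_eq0 ?uniq_cycle //.
by rewrite size_map size_iota.
Qed.

Lemma FK_relations_converse n (R : pzRingType) (x : 'I_n -> 'I_n -> R) :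
  FK_relations x -> @FK_relations n R^c x.
Proof.
case=> xN x2 xC x3; split=> //; first by move=> i j k l /xC.
move=> i j k uijk; have uikj : uniq [:: i; k; j].
  by move: uijk; rewrite /= !inE !negb_or => /andP[/andP[-> ->] /andP[/negPf]]; rewrite eq_sym => ->.
have [ij ik jk] : [/\ i != j, i != k & j != k].
  by move: uijk; rewrite /= !inE !negb_or => /andP[/andP[-> ->] /andP[-> _]].
move: (x3 _ _ _ uikj); rewrite (xN i k) // (xN k j) 1?eq_sym // (xN j i) 1?eq_sym //.
rewrite !mulrNN => H; change (x j k * x i j + x k i * x j k + x i j * x k i = 0 :> R).
by rewrite (addrC (x j k * x i j)) H.
Qed.

Lemma FK_R1_converse n (R : pzRingType) (x : 'I_n -> 'I_n -> R) :
  FK_R1 x = FK_Rn1 (x : 'I_n -> 'I_n -> R^c) :> R.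
Proof.
rewrite /FK_R1 /FK_Rn1; apply: eq_big_nat => i _.
rewrite rev_prodr /index_iota subn1.
have -> : rev (iota 1 n.-1) = map (fun k => n - k)%N (iota 1 n.-1).
  apply: (@eq_from_nth _ 0%N); first by rewrite size_rev size_map.
  move=> k; rewrite size_rev size_iota => hk.
  by rewrite nth_rev ?size_iota // (nth_map 0%N) ?size_iota // !nth_iota //; lia.
rewrite big_map; apply: eq_big_seq => k; rewrite mem_iota => /andP[_ hk].
by rewrite addnBA //; lia.
Qed.

Theorem mainTheorem20 (n : nat) (Hn : (3 <= n)%N) (A : algType rat)
    (x : 'I_n -> 'I_n -> A) :
  FK_relations x -> FK_R1 x = 0 /\ FK_Rn1 x = 0.
Proof.
have n2 : (2 <= n)%N by exact: ltnW.
move=> FKx; split; last exact: FK_Rn1_eq0.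
by rewrite FK_R1_converse (FK_Rn1_eq0 n2 (FK_relations_converse FKx)).
Qed.
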